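(* Let $\mathrm P$ be a probability measure on $\mathbb{R}^d$ with Lebesgue density $p$ supported on the convex open set $\mathcal X\subseteq\mathbb{R}^d$, and assume $p$ satisfies Assumption A. Let $\varphi$ be as in the context. Then $\partial\varphi(\mathcal X)\cap\mathbb S_{d-1}=\emptyset$, i.e. no subgradient of $\varphi$ at a point of $\mathcal X$ has Euclidean norm $1$.
   Context: $\mathbb{B}_d$ is the open unit ball of $\mathbb{R}^d$, $\mathbb S_{d-1}=\bar{\mathbb B}_d\setminus\mathbb B_d$. $\mathrm U_d$ is the spherical uniform distribution on $\mathbb B_d$, with density $u_d(\mathbf x)=\frac{1}{a_d|\mathbf x|^{d-1}}\mathbf 1[\mathbf x\in\mathbb B_d\setminus\{\mathbf 0\}]$, $a_d=2\pi^{d/2}/\Gamma(d/2)$. $\psi$ is the convex function on $\mathbb B_d$, normalized by $\psi(\mathbf 0)=0$, whose a.e. gradient pushes $\mathrm U_d$ forward to $\mathrm P$ (McCann), extended lsc to $\mathbb{R}^d$ ($+\infty$ outside $\bar{\mathbb B}_d$), and $\varphi(\mathbf x)=\sup_{\mathbf u\in\mathbb B_d}(\langle\mathbf u,\mathbf x\rangle-\psi(\mathbf u))$, so that $\nabla\varphi\sharp\mathrm P=\mathrm U_d$. $\partial\varphi$ denotes the subdifferential and $\partial\varphi(A)=\bigcup_{\mathbf x\in A}\partial\varphi(\mathbf x)$. Assumption A: for every $R>0$ there exist $0<\lambda_R\le\Lambda_R$ with $\lambda_R\le p(\mathbf x)\le\Lambda_R$ for all $\mathbf x\in\mathcal X$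 with $|\mathbf x|<R$. *)

From HB Require Import structures.
From mathcomp Require Import all_boot all_order all_algebra.
From mathcomp Require Import all_classical all_reals all_analysis.
Set Implicit Arguments. Unset Strict Implicit. Unset Printing Implicit Defensive.
Import Order.TTheory GRing.Theory Num.Theory.
Local Open Scope classical_set_scope.
Local Open Scope ring_scope.

(* Points of R^d are d-tuples of reals (these carry the product = Borel
   sigma-algebra of the library). *)
Section Euclid.
Variables (R : realType) (d : nat).
Definition vadd (x y : d.-tuple R) : d.-tuple R := [tuple tnth x i + tnth y i | i < d].
Definition vsub (x y : d.-tuple R) : d.-tuple R := [tuple tnth x i - tnth y i | i < d].
Definition vscale (t : R) (x : d.-tuple R) : d.-tuple R := [tuple t * tnth x i | i < d].
Definition vzero : d.-tuple R := [tuple (0:R) | i < d].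
Definition dotp (x y : d.-tuple R) : R := \sum_(i < d) tnth x i * tnth y i.
Definition enorm (x : d.-tuple R) : R := Num.sqrt (dotp x x).

Definition unit_ball : set (d.-tuple R) := [set x | enorm x < 1].

Definition convex_set_Rd (X : set (d.-tuple R)) : Prop :=
  forall x y t, X x -> X y -> 0 <= t <= 1 ->
    X (vadd (vscale t x) (vscale (1 - t) y)).

Definition euclid_open (X : set (d.-tuple R)) : Prop :=
  forall x, X x -> exists2 e : R, 0 < e & forall z, enorm (vsub z x) < e -> X z.

Definition convex_on_Rd (D : set (d.-tuple R)) (f : d.-tuple R -> R) : Prop :=
  forall x y t, D x -> D y -> 0 <= t <= 1 ->
    f (vadd (vscale t x) (vscale (1 - t) y)) <= t * f x + (1 - t) * f y.

Definition has_gradient (f : d.-tuple R -> R) (u v : d.-tuple R) : Prop :=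
  forall e : R, 0 < e -> exists2 del : R, 0 < del & forall h,
    enorm h < del -> `|f (vadd u h) - f u - dotp v h| <= e * enorm h.

(* Lebesgue measure on R^d: the (unique) Borel measure giving every closed
   box its volume *)
Definition is_lebesgue (lam : {measure set (d.-tuple R) -> \bar R}) : Prop :=
  forall a b : d.-tuple R, (forall i, tnth a i <= tnth b i) ->
    lam [set x | forall i, tnth a i <= tnth x i <= tnth b i] =
    (\prod_(i < d) (tnth b i - tnth a i))%:E.

Definition Euler_Gamma (s : R) : R :=
  fine (\int[@lebesgue_measure R]_(t in `]0%R, +oo[) (powR t (s - 1) * expR (- t))%:E).

Definition a_const : R := 2 * powR pi (d%:R / 2) / Euler_Gamma (d%:R / 2).

(* density of the spherical uniform distribution U_d *)
Definition u_dens (x : d.-tuple R) : R :=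
  if (0 < enorm x) && (enorm x < 1) then (a_const * enorm x ^+ d.-1)^-1 else 0.

Definition U_meas (lam : {measure set (d.-tuple R) -> \bar R})
  (A : set (d.-tuple R)) : \bar R := \int[lam]_(x in A) (u_dens x)%:E.

Definition legendre_ball (psi : d.-tuple R -> R) (x : d.-tuple R) : \bar R :=
  ereal_sup [set ((dotp u x - psi u)%:E) | u in unit_ball].

Definition subgradient (f : d.-tuple R -> \bar R) (x y : d.-tuple R) : Prop :=
  f x \is a fin_num /\ forall z, (f x + (dotp y (vsub z x))%:E <= f z)%E.
End Euclid.

From HB Require Import structures.
From mathcomp Require Import all_boot all_order all_algebra.
From mathcomp Require Import all_classical all_reals all_analysis.
From mathcomp Require Import measurable_realfun ring lra.
Import Order.TTheory GRing.Theory Num.Theory.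
Set Implicit Arguments. Unset Strict Implicit.
Local Open Scope classical_set_scope.
Local Open Scope ring_scope.

(** Suppose [y] is a unit subgradient of [phi] at [x] in [X].  Where [psi] is
    differentiable, Fenchel duality makes the pair [(u, grad psi u)] monotone
    against [(y, x)]: [<u - y, grad psi u - x> >= 0].  Since [|u| < 1 = |y|],
    this forces [u] to be within [O(e / t)] of [y] whenever [grad psi u] is
    within [e] of [x + t y].  Now place [N] disjoint cubes of side [~ r / N]
    along the segment [x + t y], [r / 4 <= t < r / 2], inside a ball around
    [x] where [p >= lr]: they carry [P]-mass [>~ N * N^-d].  Up to a null set
    their preimage under [grad psi] lies in a cube of side [~ 1 / N] around
    [y], at distance [>= 1/2] from the origin where the density of [U_d] is
    bounded, so the same mass is [<~ N^-d].  This fails for large [N]. *)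

Section EuclideanGeometry.
Variables (R : realType) (d : nat).
Implicit Types (a b c u v w : d.-tuple R).

Lemma tnth_vadd a b i : tnth (vadd a b) i = tnth a i + tnth b i.
Proof. exact: tnth_mktuple. Qed.

Lemma tnth_vsub a b i : tnth (vsub a b) i = tnth a i - tnth b i.
Proof. exact: tnth_mktuple. Qed.

Lemma tnth_vscale t a i : tnth (vscale t a) i = t * tnth a i.
Proof. exact: tnth_mktuple. Qed.

Definition tnth_vE := (tnth_vadd, tnth_vsub, tnth_vscale).

Lemma dotpC a b : dotp a b = dotp b a.
Proof. by apply: eq_bigr => i _; rewrite mulrC. Qed.

Lemma dotpDl a b c : dotp (vadd a b) c = dotp a c + dotp b c.
Proof. by rewrite /dotp -big_split; apply: eq_bigr => i _; rewrite tnth_vadd mulrDl. Qed.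

Lemma dotpBl a b c : dotp (vsub a b) c = dotp a c - dotp b c.
Proof. by rewrite /dotp -sumrB; apply: eq_bigr => i _; rewrite tnth_vsub mulrBl. Qed.

Lemma dotpZl t a c : dotp (vscale t a) c = t * dotp a c.
Proof. by rewrite /dotp mulr_sumr; apply: eq_bigr => i _; rewrite tnth_vscale mulrA. Qed.

Lemma dotpDr a b c : dotp c (vadd a b) = dotp c a + dotp c b.
Proof. by rewrite dotpC dotpDl !(dotpC c). Qed.

Lemma dotpBr a b c : dotp c (vsub a b) = dotp c a - dotp c b.
Proof. by rewrite dotpC dotpBl !(dotpC c). Qed.

Lemma dotpZr t a c : dotp c (vscale t a) = t * dotp c a.
Proof. by rewrite dotpC dotpZl dotpC. Qed.

Lemma dotp_ge0 a : 0 <= dotp a a.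
Proof. by apply: sumr_ge0 => i _; rewrite -expr2 sqr_ge0. Qed.

Lemma enorm_ge0 a : 0 <= enorm a.
Proof. exact: sqrtr_ge0. Qed.

Lemma sqr_enorm a : enorm a ^+ 2 = dotp a a.
Proof. by rewrite sqr_sqrtr // dotp_ge0. Qed.

Lemma sqr_tnth_le_dotp a i : tnth a i ^+ 2 <= dotp a a.
Proof.
rewrite /dotp (bigD1 i) //= -expr2 lerDl.
by apply: sumr_ge0 => j _; rewrite -expr2 sqr_ge0.
Qed.

Lemma enorm_eq0 a : enorm a = 0 -> forall i, tnth a i = 0.
Proof.
move=> a0 i; apply/eqP; rewrite -sqrf_eq0 eq_le sqr_ge0 andbT.
by have := sqr_tnth_le_dotp a i; rewrite -sqr_enorm a0 expr0n.
Qed.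

Lemma normr_tnth_le_enorm a i : `|tnth a i| <= enorm a.
Proof.
rewrite -(ler_pXn2r (_ : 0 < 2)%N) ?nnegrE ?enorm_ge0 //.
by rewrite sqr_enorm real_normK ?num_real ?sqr_tnth_le_dotp.
Qed.

Lemma dotp_le_half_sum a b : 2 * dotp a b <= dotp a a + dotp b b.
Proof.
have := dotp_ge0 (vsub a b); rewrite !dotpBl !dotpBr (dotpC b a); lra.
Qed.

Lemma cauchy_schwarz a b : dotp a b <= enorm a * enorm b.
Proof.
have dotp0 c e : enorm c = 0 -> dotp c e = 0.
  by move=> c0; rewrite /dotp big1 // => i _; rewrite enorm_eq0 ?mul0r.
have [a0|a0] := eqVneq (enorm a) 0; first by rewrite dotp0 ?a0 ?mul0r.
have [b0|b0] := eqVneq (enorm b) 0; first by rewrite dotpC dotp0 ?b0 ?mulr0.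
have ab_gt0 : 0 < enorm a * enorm b by rewrite mulr_gt0 // lt0r ?a0 ?b0 enorm_ge0.
have := dotp_le_half_sum (vscale (enorm b) a) (vscale (enorm a) b).
rewrite !(dotpZl, dotpZr) -!sqr_enorm => h.
by rewrite -(ler_pM2l ab_gt0); nra.
Qed.

Lemma ler_enormD a b : enorm (vadd a b) <= enorm a + enorm b.
Proof.
rewrite -(ler_pXn2r (_ : 0 < 2)%N) ?nnegrE ?addr_ge0 ?enorm_ge0 //.
rewrite sqr_enorm dotpDl !dotpDr (dotpC b a) sqrrD !sqr_enorm.
have := cauchy_schwarz a b; lra.
Qed.

Lemma enormZ t a : enorm (vscale t a) = `|t| * enorm a.
Proof. by rewrite /enorm dotpZl dotpZr mulrA -expr2 sqrtrM ?sqr_ge0 // sqrtr_sqr. Qed.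

Lemma enorm_vsubC a b : enorm (vsub a b) = enorm (vsub b a).
Proof.
by rewrite /enorm /dotp; congr Num.sqrt; apply: eq_bigr => i _; rewrite !tnth_vsub; ring.
Qed.

Lemma vadd_vsub a b : vadd a (vsub b a) = b.
Proof. by apply: eq_from_tnth => i; rewrite !tnth_vE; ring. Qed.

Lemma enorm_le_sup_tnth a r : 0 <= r -> (forall i, `|tnth a i| <= r) ->
  enorm a <= d.+1%:R * r.
Proof.
move=> r0 ar; rewrite -(ler_pXn2r (_ : 0 < 2)%N) ?nnegrE ?mulr_ge0 ?enorm_ge0 //.
rewrite sqr_enorm /dotp; apply: le_trans (_ : _ <= \sum_(i < d) r ^+ 2) _.
  apply: ler_sum => i _; rewrite -expr2 -real_normK ?num_real //.
  by rewrite lerXn2r ?nnegrE ?normr_ge0.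
rewrite sumr_const card_ord exprMn -natrX mulrC mulr_natr.
apply: ler_wpMn2l; first exact: sqr_ge0.
by rewrite (leq_trans (leqnSn d)) // expnS leq_pmulr // expn_gt0.
Qed.

Lemma unit_monotone_deviation_le u v x y t : enorm y = 1 -> enorm u < 1 -> 0 < t ->
  0 <= dotp (vsub u y) (vsub v x) ->
  t * enorm (vsub u y) <= 2 * enorm (vsub (vsub v x) (vscale t y)).
Proof.
move=> y1 u1 t0; set e := vsub (vsub v x) (vscale t y).
have -> : vsub v x = vadd (vscale t y) e.
  by apply: eq_from_tnth => i; rewrite !tnth_vE; ring.
rewrite dotpDr dotpZr dotpBl => mono.
have yy : dotp y y = 1 by rewrite -sqr_enorm y1 expr1n.
have uu : dotp u u < 1 by rewrite -sqr_enorm -(expr1n R 2) ltrXn2r ?enorm_ge0.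
have uy : enorm (vsub u y) ^+ 2 = dotp u u - 2 * dotp u y + 1.
  by rewrite sqr_enorm dotpBl !dotpBr (dotpC y u) yy; ring.
have cs := cauchy_schwarz (vsub u y) e.
have uy0 := enorm_ge0 (vsub u y); have e0 := enorm_ge0 e.
rewrite yy in mono.
have [->|uy_ne0] := eqVneq (enorm (vsub u y)) 0; first by nra.
have uy_gt0 : 0 < enorm (vsub u y) by rewrite lt0r uy_ne0.
nra.
Qed.
End EuclideanGeometry.

Section ConvexFunctions.
Variables (R : realType) (d : nat).

Lemma convex_gradient_le (D : set (d.-tuple R)) (f : d.-tuple R -> R) u u' G :
  convex_on_Rd D f -> D u -> D u' -> has_gradient f u G ->
  dotp G (vsub u' u) <= f u' - f u.
Proof.
move=> cvx Du Du' grad; set w := vsub u' u.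
have chord t : 0 < t <= 1 -> f (vadd u (vscale t w)) - f u <= t * (f u' - f u).
  case/andP=> t0 t1.
  have -> : vadd u (vscale t w) = vadd (vscale t u') (vscale (1 - t) u).
    by apply: eq_from_tnth => i; rewrite !tnth_vE; ring.
  by have := cvx u' u t Du' Du (introT andP (conj (ltW t0) t1)); lra.
apply/ler_addgt0Pr => e e0.
have w0 := enorm_ge0 w.
have [del del0 near_u] := grad (e / (enorm w + 1)) (divr_gt0 e0 (ltr_pwDr ltr01 w0)).
pose t := del / (del + enorm w + 1).
have den0 : 0 < del + enorm w + 1 by lra.
have t0 : 0 < t by rewrite divr_gt0.
have t1 : t <= 1 by rewrite ler_pdivrMr // mul1r; lra.
have tw : t * enorm w < del by rewrite /t mulrAC ltr_pdivrMr // mulrDr; nra.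
have := near_u (vscale t w); rewrite enormZ gtr0_norm // dotpZr => /(_ tw).
rewrite ler_norml => /andP[lin _].
have ew : e / (enorm w + 1) * enorm w <= e.
  by rewrite mulrAC ler_pdivrMr ?mulrDr; nra.
have ch := chord t (introT andP (conj t0 t1)).
have tew : t * (e / (enorm w + 1) * enorm w) <= t * e by rewrite ler_pM2l.
rewrite -(ler_pM2l t0); lra.
Qed.
End ConvexFunctions.

Section Legendre.
Variables (R : realType) (d : nat) (psi : d.-tuple R -> R).
Hypothesis psi_convex : convex_on_Rd (@unit_ball R d) psi.

Lemma legendre_ball_le_gradient u v : unit_ball u -> has_gradient psi u v ->
  (legendre_ball psi v <= (dotp u v - psi u)%:E)%E.
Proof.
move=> Bu grad; apply/ge_ereal_sup => _ [u' Bu' <-]; rewrite lee_fin.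
have := convex_gradient_le psi_convex Bu Bu' grad.
rewrite dotpBr (dotpC v u') (dotpC v u); lra.
Qed.

Lemma subgradient_legendre_monotone u v x y : unit_ball u -> has_gradient psi u v ->
  subgradient (legendre_ball psi) x y -> 0 <= dotp (vsub u y) (vsub v x).
Proof.
move=> Bu grad [fx sub_y].
have lo : ((dotp u x - psi u)%:E <= legendre_ball psi x)%E.
  by apply: ereal_sup_ubound; exists u.
have := le_trans (sub_y v) (legendre_ball_le_gradient Bu grad).
rewrite -(fineK fx) in lo *; rewrite -EFinD !lee_fin in lo *.
rewrite dotpBl !dotpBr (dotpC u v) (dotpC y v); lra.
Qed.
End Legendre.

Section IntegralBounds.
Import HBNNSimple.
Context (dT : measure_display) (T : measurableType dT) (R : realType).
Variable mu : {measure set T -> \bar R}.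

(* No measurability of [f] is needed: its integral is the supremum of the
   integrals of simple functions below it, each of which is compared to [h]. *)
Lemma ae_ge0_le_integral_measurable_ub (D : set T) (f h : T -> \bar R) :
  measurable D -> (forall x, D x -> 0 <= f x)%E ->
  measurable_fun D h -> (forall x, D x -> 0 <= h x)%E ->
  {ae mu, forall x, D x -> f x <= h x}%E ->
  (\int[mu]_(x in D) f x <= \int[mu]_(x in D) h x)%E.
Proof.
move=> mD f0 mh h0 fh; rewrite ge0_integralE //.
apply/ge_ereal_sup => _ [s sf <-].
have := integral_nnsfun mu measurableT s; rewrite patch_setT => <-.
rewrite [leRHS]integral_mkcond.
have h0' x : (0 <= (h \_ D) x)%E by rewrite /patch; case: ifPn => // /set_mem /h0.
apply: ae_ge0_le_integral => //.
- by move=> x _; rewrite lee_fin fun_ge0.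
- exact: measurableT_comp.
- exact/(measurable_restrictT _ _).1.
apply: filterS fh => x fhx _; have := sf x; rewrite /patch; case: ifPn => // /set_mem Dx.
by move/le_trans; apply; apply: fhx.
Qed.

Lemma integral_le_scaled_measure (D B : set T) (f : T -> \bar R) (c : R) :
  measurable D -> measurable B -> 0 <= c -> (forall x, D x -> 0 <= f x)%E ->
  {ae mu, forall x, D x -> f x <= (c * \1_B x)%:E}%E ->
  (\int[mu]_(x in D) f x <= c%:E * mu B)%E.
Proof.
move=> mD mB c0 f0 fB.
have cB0 x : (0 <= (c * \1_B x)%:E)%E by rewrite lee_fin mulr_ge0.
have mcB : measurable_fun setT (fun x => (c * \1_B x)%:E).
  by apply/measurable_EFinP; apply: measurable_funM => //; exact: measurable_indic.
apply: le_trans (ae_ge0_le_integral_measurable_ub mD f0 _ _ fB) _ => //.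
  exact: measurable_funS mcB.
apply: (@le_trans _ _ (\int[mu]_(x in setT) (c * \1_B x)%:E)%E).
  exact: ge0_subset_integral.
under eq_integral do rewrite EFinM.
have <- : (\int[mu]_(x in setT) (\1_B x)%:E = mu B)%E.
  by rewrite integral_indic // setIT.
rewrite ge0_integralZl_EFin //.
by apply/measurable_EFinP; exact: measurable_indic.
Qed.

Lemma cst_mul_measure_le_integral (D : set T) (f : T -> R) (c : R) :
  measurable D -> measurable_fun D f -> 0 <= c -> (forall x, D x -> c <= f x) ->
  (c%:E * mu D <= \int[mu]_(x in D) (f x)%:E)%E.
Proof.
move=> mD mf c0 cf; rewrite -integral_cst //.
by apply: ge0_le_integral => //; exact/measurable_EFinP.
Qed.
End IntegralBounds.

Section Cubes.
Variables (R : realType) (d : nat).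
Implicit Types (c z : d.-tuple R) (r : R).

Definition cube c r : set (d.-tuple R) :=
  [set z | forall i, tnth c i - r <= tnth z i <= tnth c i + r].

Lemma cube_measurable c r : measurable (cube c r).
Proof.
have -> : cube c r = \bigcap_(i in [set: 'I_d])
    ([set: d.-tuple R] `&` ((fun z => tnth z i) @^-1` `[tnth c i - r, tnth c i + r])).
  apply/seteqP; split => z /=; first by move=> cz i _; split => //=; rewrite in_itv /= cz.
  by move=> cz i; have [_ /=] := cz i I; rewrite in_itv.
apply: fin_bigcap_measurable; first exact: finite_finset.
by move=> i _; apply: measurable_tnth => //; exact: measurable_itv.
Qed.

Lemma lebesgue_cube (lam : {measure set (d.-tuple R) -> \bar R}) :
  is_lebesgue lam -> forall c r, 0 <= r -> lam (cube c r) = ((2 * r) ^+ d)%:E.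
Proof.
move=> leb c r r0.
have := leb [tuple tnth c i - r | i < d] [tuple tnth c i + r | i < d].
have -> : [set z | forall i, tnth [tuple tnth c i - r | i < d] i <= tnth z i
                              <= tnth [tuple tnth c i + r | i < d] i] = cube c r.
  by apply/seteqP; split => z /= cz i; move: (cz i); rewrite !tnth_mktuple.
move=> ->; last by move=> i; rewrite !tnth_mktuple; lra.
rewrite (eq_bigr (fun=> 2 * r)) ?prodr_const ?card_ord // => i _.
by rewrite !tnth_mktuple; ring.
Qed.

Lemma enorm_vsub_cube c r z : 0 <= r -> cube c r z -> enorm (vsub z c) <= d.+1%:R * r.
Proof.
move=> r0 cz; apply: enorm_le_sup_tnth => // i.
by rewrite tnth_vsub ler_norml; have := cz i; lra.
Qed.

Lemma cube_disjoint c c' r : 0 <= r -> 2 * (d.+1%:R * r) < enorm (vsub c c') ->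
  cube c r `&` cube c' r = set0.
Proof.
move=> r0 far; apply/seteqP; split => // z [cz c'z].
have := ler_enormD (vsub c z) (vsub z c').
have -> : vadd (vsub c z) (vsub z c') = vsub c c'.
  by apply: eq_from_tnth => i; rewrite !tnth_vE; ring.
rewrite (enorm_vsubC c z).
have := enorm_vsub_cube r0 cz; have := enorm_vsub_cube r0 c'z; lra.
Qed.
End Cubes.

Section SphericalUniformDensity.
Variables (R : realType) (d : nat).

Lemma a_const_ge0 : 0 <= a_const R d.
Proof.
apply: divr_ge0; first by rewrite mulr_ge0 ?powR_ge0.
apply: fine_ge0; apply: integral_ge0 => t _.
by rewrite lee_fin mulr_ge0 ?powR_ge0 ?expR_ge0.
Qed.

Lemma u_dens_ge0 (u : d.-tuple R) : 0 <= u_dens u.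
Proof.
rewrite /u_dens; case: ifP => // _.
by rewrite invr_ge0 mulr_ge0 ?a_const_ge0 ?exprn_ge0 ?enorm_ge0.
Qed.

Definition u_dens_bound : R := (a_const R d * 2^-1 ^+ d.-1)^-1.

Lemma u_dens_bound_ge0 : 0 <= u_dens_bound.
Proof. by rewrite invr_ge0 mulr_ge0 ?a_const_ge0 ?exprn_ge0 ?invr_ge0. Qed.

Lemma u_dens_le_bound (u : d.-tuple R) : 2^-1 <= enorm u -> u_dens u <= u_dens_bound.
Proof.
move=> u_ge; rewrite /u_dens /u_dens_bound; case: ifP => _; last exact: u_dens_bound_ge0.
have [->|a0] := eqVneq (a_const R d) 0; first by rewrite !mul0r invr0.
have a_gt0 : 0 < a_const R d by rewrite lt0r a0 a_const_ge0.
have h_gt0 : 0 < 2^-1 :> R by rewrite invr_gt0.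
have u_gt0 : 0 < enorm u by apply: lt_le_trans u_ge.
rewrite lef_pV2 ?posrE ?(mulr_gt0 a_gt0) ?exprn_gt0 //.
by rewrite ler_pM2l // lerXn2r // nnegrE ?enorm_ge0 // ltW.
Qed.
End SphericalUniformDensity.

Section UnitSubgradient.
Variables (R : realType) (d : nat) (lam : {measure set (d.-tuple R) -> \bar R}).
Variables (P : probability (d.-tuple R) R) (p : d.-tuple R -> R).
Variables (psi : d.-tuple R -> R) (g : d.-tuple R -> d.-tuple R).
Hypothesis lam_lebesgue : is_lebesgue lam.
Hypothesis p_measurable : measurable_fun setT p.
Hypothesis P_density : forall A, measurable A -> P A = (\int[lam]_(z in A) (p z)%:E)%E.
Hypothesis psi_convex : convex_on_Rd (@unit_ball R d) psi.
Hypothesis g_measurable : measurable_fun setT g.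
Hypothesis g_gradient : {ae lam, forall u, unit_ball u -> has_gradient psi u (g u)}.
Hypothesis g_push : forall A, measurable A -> U_meas lam (g @^-1` A) = P A.
Variables (x y : d.-tuple R) (r lr : R).
Hypotheses (r_gt0 : 0 < r) (lr_gt0 : 0 < lr).
Hypothesis p_ge_lr : forall z, enorm (vsub z x) < r -> lr <= p z.
Hypothesis y_subgradient : subgradient (legendre_ball psi) x y.
Hypothesis y_unit : enorm y = 1.

Let K : R := d.+1%:R.

Let K_gt0 : 0 < K. Proof. exact: ltr0Sn. Qed.

Lemma gradient_in_cube_near_y u t a : unit_ball u -> has_gradient psi u (g u) ->
  0 < t -> 0 <= a -> cube (vadd x (vscale t y)) a (g u) ->
  t * enorm (vsub u y) <= 2 * (K * a).
Proof.
move=> Bu grad t0 a0 cube_gu.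
have mono := subgradient_legendre_monotone psi_convex Bu grad y_subgradient.
apply: le_trans (unit_monotone_deviation_le y_unit Bu t0 mono) _.
have -> : vsub (vsub (g u) x) (vscale t y) = vsub (g u) (vadd x (vscale t y)).
  by apply: eq_from_tnth => i; rewrite !tnth_vE; ring.
by rewrite ler_pM2l //; exact: enorm_vsub_cube.
Qed.

Section Probes.
Variable N : nat.
Hypothesis N_gt1 : (1 < N)%N.

(* The spacing [step] exceeds twice the [K * side = step / 3] that bounds the
   distance from a cube's centre to its points, and [N * step = r / 4] is the
   lowest height: this gives disjointness and puts preimages [N^-1]-close to [y]. *)
Let step : R := r / (4 * N%:R).
Let side : R := step / (3 * K).
Let height (k : nat) : R := r / 4 + k%:R * step.
Let probe (k : nat) := cube (vadd x (vscale (height k) y)) side.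

Let N_gt0 : 0 < N%:R :> R. Proof. by rewrite ltr0n ltnW. Qed.
Let step_gt0 : 0 < step. Proof. by rewrite divr_gt0 ?mulr_gt0. Qed.
Let side_ge0 : 0 <= side. Proof. by rewrite divr_ge0 ?(ltW step_gt0) ?mulr_ge0 ?(ltW K_gt0). Qed.
Let r_step : r = 4 * N%:R * step. Proof. by rewrite /step mulrC divfK ?gt_eqF ?mulr_gt0. Qed.
Let K_side : K * side = step / 3. Proof. by rewrite /side; field; rewrite gt_eqF. Qed.
Let probe_measurable k : measurable (probe k). Proof. exact: cube_measurable. Qed.

Lemma probes_disjoint : trivIset setT probe.
Proof.
move=> j k _ _ [z [zj zk]]; apply/eqP; apply: contraT => jk.
have jk1 : 1 <= `|j%:R - k%:R| :> R.
  case: (ltngtP j k) => [jk'|kj|jk_eq]; last by rewrite jk_eq eqxx in jk.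
  - rewrite distrC ger0_norm; last by rewrite subr_ge0 ler_nat ltnW.
    by rewrite lerBrDr addrC natr1 ler_nat.
  - rewrite ger0_norm; last by rewrite subr_ge0 ler_nat ltnW.
    by rewrite lerBrDr addrC natr1 ler_nat.
suff : probe j `&` probe k = set0 by move/seteqP => [/(_ z (conj zj zk))].
apply: cube_disjoint => //.
have -> : vsub (vadd x (vscale (height j) y)) (vadd x (vscale (height k) y))
          = vscale ((j%:R - k%:R) * step) y.
  by apply: eq_from_tnth => i; rewrite !tnth_vE /height; ring.
rewrite enormZ y_unit mulr1 normrM (gtr0_norm step_gt0) K_side.
have : step <= `|j%:R - k%:R| * step by rewrite ler_peMl // ltW.
have := step_gt0; lra.
Qed.

Lemma probe_near_x k z : (k < N)%N -> probe k z -> enorm (vsub z x) < r.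
Proof.
move=> kN zk.
have -> : vsub z x = vadd (vsub z (vadd x (vscale (height k) y))) (vscale (height k) y).
  by apply: eq_from_tnth => i; rewrite !tnth_vE; ring.
apply: le_lt_trans (ler_enormD _ _) _.
have hk_gt0 : 0 < height k.
  have : 0 <= k%:R * step by apply: mulr_ge0 => //; exact: ltW.
  by rewrite /height; have := r_gt0; lra.
rewrite enormZ y_unit mulr1 (gtr0_norm hk_gt0).
have kstep : k%:R * step <= N%:R * step.
  by apply: ler_wpM2r; [exact: ltW | rewrite ler_nat ltnW].
have Nstep : step <= N%:R * step.
  by rewrite ler_peMl ?(ltW step_gt0) // ler1n (ltnW N_gt1).
have := enorm_vsub_cube side_ge0 zk; rewrite K_side.
by have := step_gt0; have := r_step; rewrite /height; lra.
Qed.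

Lemma probe_preimage_in_cube k u : unit_ball u -> has_gradient psi u (g u) -> probe k (g u) ->
  cube y N%:R^-1 u /\ 2^-1 <= enorm u.
Proof.
move=> Bu grad gu_k.
have k_step0 : 0 <= k%:R * step by apply: mulr_ge0 => //; exact: ltW.
have hk_gt0 : 0 < height k by rewrite /height; have := r_gt0; lra.
have := gradient_in_cube_near_y Bu grad hk_gt0 side_ge0 gu_k.
rewrite K_side /height r_step.
have D0 := enorm_ge0 (vsub u y); set D := enorm (vsub u y) => near.
have ND : N%:R * D <= 2 / 3.
  have kD : 0 <= k%:R * step * D by rewrite mulr_ge0.
  have : step * (N%:R * D) <= step * (2 / 3) by lra.
  by rewrite ler_pM2l.
have N2 : 2 <= N%:R :> R by rewrite (ler_nat R 2).
have D_le : D <= N%:R^-1.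
  by rewrite -div1r ler_pdivlMr //; lra.
split.
  move=> i; have := normr_tnth_le_enorm (vsub u y) i.
  by rewrite tnth_vsub -/D ler_norml; lra.
have := ler_enormD u (vsub y u); rewrite vadd_vsub y_unit enorm_vsubC -/D; nra.
Qed.

Let probes := \big[setU/set0]_(k < N) probe k.

Lemma probes_mass_ge : ((N%:R * (lr * (2 * side) ^+ d))%:E <= P probes)%E.
Proof.
rewrite /probes measure_bigsetU //; last exact: probes_disjoint.
have -> : ((N%:R * (lr * (2 * side) ^+ d))%:E = \sum_(k < N) (lr * (2 * side) ^+ d)%:E)%E.
  by rewrite sumEFin sumr_const card_ord mulr_natl.
apply: lee_sum => k _.
apply: (@le_trans _ _ (\int[lam]_(z in probe k) (p z)%:E)%E); last by rewrite -P_density.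
rewrite EFinM -(lebesgue_cube lam_lebesgue (vadd x (vscale (height k) y)) side_ge0).
apply: cst_mul_measure_le_integral; first exact: cube_measurable.
- exact: measurable_funS p_measurable.
- exact: ltW.
- by move=> z zk; apply: p_ge_lr; exact: probe_near_x zk.
Qed.

Lemma probes_mass_le : (P probes <= (u_dens_bound R d * (2 / N%:R) ^+ d)%:E)%E.
Proof.
have mprobes : measurable probes by exact: bigsetU_measurable.
have mpre : measurable (g @^-1` probes) by rewrite -[g @^-1` _]setTI; exact: g_measurable.
rewrite -g_push // /U_meas EFinM -(lebesgue_cube lam_lebesgue y); last by rewrite invr_ge0 ltW.
apply: integral_le_scaled_measure => //; first exact: cube_measurable.
- exact: u_dens_bound_ge0.
- by move=> u _; rewrite lee_fin u_dens_ge0.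
apply: filterS g_gradient => u grad_u pre_u; rewrite lee_fin.
have [Bu|notBu] := pselect (unit_ball u).
  move: pre_u; rewrite /probes /preimage /= -bigcup_mkord => -[k _ gu_k].
  have [cube_u u_ge] := probe_preimage_in_cube Bu (grad_u Bu) gu_k.
  by rewrite indicE mem_set // mulr1 u_dens_le_bound.
have -> : u_dens u = 0.
  by rewrite /u_dens (_ : enorm u < 1 = false) ?andbF //; exact/negbTE/negP.
by rewrite mulr_ge0 ?u_dens_bound_ge0 // indicE ler0n.
Qed.

Lemma probes_count_bound : N%:R * (lr * (r / (6 * K)) ^+ d) <= u_dens_bound R d * 2 ^+ d.
Proof.
have := le_trans probes_mass_ge probes_mass_le; rewrite lee_fin.
have -> : 2 * side = r / (6 * K) / N%:R.
  by rewrite /side /step; field; rewrite !gt_eqF.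
have Nd_gt0 : 0 < N%:R ^+ d :> R by exact: exprn_gt0.
by rewrite !expr_div_n -(ler_pM2r Nd_gt0) !mulrA !divfK ?gt_eqF //.
Qed.
End Probes.

Lemma unit_subgradient_absurd : False.
Proof.
set W := r / (6 * K); set C := u_dens_bound R d.
have lrW_gt0 : 0 < lr * W ^+ d by rewrite mulr_gt0 ?exprn_gt0 ?divr_gt0 ?mulr_gt0.
pose N := (Num.truncn (C * 2 ^+ d / (lr * W ^+ d))).+2.
have N_big : C * 2 ^+ d < N%:R * (lr * W ^+ d).
  rewrite -ltr_pdivrMr //; apply: lt_le_trans (truncnS_gt _) _.
  by rewrite ler_nat.
have := probes_count_bound (isT : (1 < N)%N); rewrite -/W -/C; lra.
Qed.
End UnitSubgradient.

Theorem lemma2p2 (R : realType) (d : nat)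
  (lam : {measure set (d.-tuple R) -> \bar R})
  (P : probability (d.-tuple R) R)
  (p : d.-tuple R -> R) (X : set (d.-tuple R))
  (psi : d.-tuple R -> R) (g : d.-tuple R -> d.-tuple R) :
  is_lebesgue lam ->
  convex_set_Rd X -> euclid_open X ->
  measurable_fun setT p -> (forall x, 0 <= p x) -> (forall x, ~ X x -> p x = 0) ->
  (forall A, measurable A -> (P A = \int[lam]_(x in A) (p x)%:E)%E) ->
  (forall r : R, 0 < r -> exists lr : R, exists Lr : R,
     [/\ 0 < lr, lr <= Lr &
         forall x, X x -> enorm x < r -> lr <= p x <= Lr]) ->
  convex_on_Rd (@unit_ball R d) psi -> psi (vzero R d) = 0 ->
  measurable_fun setT g ->
  {ae lam, forall u, unit_ball u -> has_gradient psi u (g u)} ->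
  (forall A, measurable A -> (U_meas lam (g @^-1` A) = P A)%E) ->
  forall x y, X x -> subgradient (legendre_ball psi) x y -> enorm y <> 1.
Proof.
move=> leb _ X_open p_meas _ _ P_dens assumptionA psi_cvx _ g_meas g_grad g_push x y Xx.
move=> y_sub y_unit; have [r r_gt0 ball_X] := X_open x Xx.
have xr_gt0 : 0 < enorm x + r by have := enorm_ge0 x; lra.
have [lr [Lr [lr_gt0 _ p_bounds]]] := assumptionA _ xr_gt0.
apply: (unit_subgradient_absurd leb p_meas P_dens psi_cvx g_meas g_grad g_push
  r_gt0 lr_gt0 _ y_sub y_unit) => z zx.
have zxr : enorm z < enorm x + r.
  by rewrite -(vadd_vsub x z); apply: le_lt_trans (ler_enormD _ _) _; rewrite ltrD2l.
by have /andP[] := p_bounds z (ball_X z zx) zxr.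
Qed.
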